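(* Let $\mathcal{X}=\{x_1,\dots,x_n\}$, $\mathcal{X}_{\mathrm{in}}\subseteq\mathcal{X}$ with $n_{\mathrm{in}}$ points, and $1\le n_{\mathrm{out}}\le n_{\mathrm{in}}$. For any SPSD $K\in\mathbb{R}^{n\times n}$, uniform subsampling without replacement (returning a uniformly random size-$n_{\mathrm{out}}$ subset of $\mathcal{X}_{\mathrm{in}}$) is a $(K,\nu,0)$-sub-Gaussian thinning algorithm with $\nu=\sqrt{\|K\|_{\max}}/\sqrt{n_{\mathrm{out}}}$.
   Context: $\|K\|_{\max}$ is the largest absolute entry of $K$. $p_{\mathrm{in},i}=\mathbf{1}\{x_i\in\mathcal{X}_{\mathrm{in}}\}/n_{\mathrm{in}}$, $q_{\mathrm{out},i}=\mathbf{1}\{x_i\in\mathcal{X}_{\mathrm{out}}\}/n_{\mathrm{out}}$. A thinning algorithm is $(K,\nu,\delta)$-sub-Gaussian if $K$ is SPSD, $\nu>0$, $\delta\in[0,1)$ and there is an event $\mathcal{E}$ with $\mathbb{P}(\mathcal{E})\ge1-\delta/2$ such that $\mathbb{E}[\exp(\langle u,K(p_{\mathrm{in}}-q_{\mathrm{out}})\rangle)\mathbf{1}_{\mathcal{E}}]\le\exp(\frac{\nu^2}{2}u^\top Ku)$ for all $u\in\mathbb{R}^n$. *)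

From mathcomp Require Import all_boot all_order all_algebra.
From mathcomp Require Import reals.
From mathcomp Require Import sequences exp.
Set Implicit Arguments. Unset Strict Implicit. Unset Printing Implicit Defensive.
Import Order.TTheory GRing.Theory Num.Theory.
Local Open Scope ring_scope.

Section Defs.
Variables (R : realType) (n : nat).

Definition qform (x : 'cV[R]_n) (A : 'M[R]_n) (y : 'cV[R]_n) : R :=
  (x^T *m A *m y) 0 0.

Definition spsd (K : 'M[R]_n) : Prop :=
  K^T = K /\ forall u : 'cV[R]_n, 0 <= qform u K u.

Definition maxabs (K : 'M[R]_n) : R :=
  \big[Num.max/0]_(i < n) \big[Num.max/0]_(j < n) `|K i j|.

(* p_in (indices of X_in are the set S) and q_out (output set T) *)
Definition pin (S : {set 'I_n}) : 'cV[R]_n :=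
  \col_i ((i \in S)%:R / #|S|%:R).
Definition qout (T : {set 'I_n}) (nout : nat) : 'cV[R]_n :=
  \col_i ((i \in T)%:R / nout%:R).

(* A thinning algorithm is described by the law [mu] of its random output
   (a subset T of indices, of size nout), mu T = P(output = T). *)
Definition subgaussian_thinning (K : 'M[R]_n) (nu delta : R)
  (S : {set 'I_n}) (nout : nat) (mu : {set 'I_n} -> R) : Prop :=
  spsd K /\ 0 < nu /\ 0 <= delta < 1 /\
  exists E : {set {set 'I_n}},
    1 - delta / 2 <= \sum_(T in E) mu T /\
    forall u : 'cV[R]_n,
      \sum_(T in E) mu T * expR (qform u K (pin S - qout T nout))
        <= expR (nu ^+ 2 / 2 * qform u K u).

Definition subsets_of (S : {set 'I_n}) (nout : nat) : {set {set 'I_n}} :=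
  [set T : {set 'I_n} | (T \subset S) && (#|T| == nout)].

Definition uniform_subsample (S : {set 'I_n}) (nout : nat) (T : {set 'I_n}) : R :=
  if T \in subsets_of S nout then 1 / #|subsets_of S nout|%:R else 0.

End Defs.

(* Write w := K u.  Then <u, K (p_in - q_out)> = mean_S w - (1/n_out) sum_(i in T) w_i,
   so the moment generating function of uniform subsampling is exp (mean_S w) times
   the mean, over the n_out-subsets T of S, of prod_(i in T) exp (- w_i / n_out).
   By Maclaurin's inequality this mean is at most the n_out-th power of the mean of
   exp (- w_i / n_out) over S: sampling without replacement is dominated by sampling
   with replacement.  Hoeffding's lemma bounds that single-draw mean, since
   |w_i| <= sqrt (K_ii u^T K u) <= sqrt (||K||_max u^T K u) by Cauchy-Schwarz for
   the semi-inner product defined by K. *)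

From mathcomp Require Import all_boot all_order all_algebra.
From mathcomp Require Import reals.
From mathcomp Require Import sequences exp.
From mathcomp Require Import normedtype derive realfun.
From mathcomp Require Import ring lra.

Set Implicit Arguments.
Unset Strict Implicit.
Unset Printing Implicit Defensive.

Import numFieldNormedType.Exports.
Import Order.TTheory GRing.Theory Num.Theory.
Local Open Scope ring_scope.

Section Hoeffding.
Variable R : realType.

Lemma MVT_line (f df : R -> R) (a b : R) : a <= b ->
  (forall x : R, is_derive x 1 f (df x)) ->
  exists2 c, a <= c <= b & f b - f a = df c * (b - a).
Proof.
move=> ab f'; have [|c] := MVT_segment ab (fun x _ => f' x).
  by apply: derivable_within_continuous => x _; case: (f' x).
by rewrite in_itv; exists c.
Qed.

Section Bernoulli.
Variable p : R.
Hypotheses (p_ge0 : 0 <= p) (p_le1 : p <= 1).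

(* [D] is the mgf of a Bernoulli(p) variable and [q] its tilted success probability;
   [phi' = phi (q - p - h/4)] changes sign at 0 because [q' = q (1 - q) <= 1/4],
   so [phi <= phi 0 = 1]. *)
Let D (h : R) : R := 1 - p + p * expR h.
Let q (h : R) : R := p * expR h / D h.
Let phi (h : R) : R := expR (- (p * h + h ^+ 2 / 8)) * D h.

Let D_gt0 h : 0 < D h.
Proof.
rewrite /D; have [->|p_neq0] := eqVneq p 0; first by rewrite mul0r subr0 addr0.
have : 0 < p * expR h by rewrite mulr_gt0 ?expR_gt0 // lt_def p_neq0.
move: p_le1; lra.
Qed.

Let phi_gt0 h : 0 < phi h.
Proof. by rewrite mulr_gt0 ?expR_gt0. Qed.

Let is_derive_D (x : R) : is_derive x 1 D (p * expR x).
Proof. by apply: is_derive_eq; rewrite /GRing.scale /=; ring. Qed.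

Let is_derive_q (x : R) : is_derive x 1 q (q x * (1 - q x)).
Proof.
have num : is_derive x 1 (fun h : R => p * expR h) (p * expR x).
  exact: is_derive_eq.
apply: is_derive_eq
  (is_deriveM num (is_deriveV (lt0r_neq0 (D_gt0 x)) (is_derive_D x))) _.
rewrite /q /GRing.scale /=; have := D_gt0 x; move: (D x) => d d_gt0.
by field; lra.
Qed.

Let is_derive_phi (x : R) : is_derive x 1 phi (phi x * (q x - p - x / 4)).
Proof.
have exponent : is_derive x 1 (fun h : R => - (p * h + h ^+ 2 / 8)) (- (p + x / 4)).
  by apply: is_derive_eq; rewrite /GRing.scale /=; field.
apply: is_derive_eq
  (is_deriveM (is_derive1_comp (is_derive_expR _) exponent) (is_derive_D x)) _.
rewrite /phi /q /GRing.scale /=; have := D_gt0 x; move: (D x) => d d_gt0.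
by field; lra.
Qed.

Let q'_le c : q c * (1 - q c) <= 1 / 4.
Proof. by have := sqr_ge0 (q c - 1 / 2); lra. Qed.

Let q0 : q 0 = p.
Proof. by rewrite /q /D expR0 mulr1 subrK divr1. Qed.

Let q_sub_le h : 0 <= h -> q h - p <= h / 4.
Proof.
move=> h_ge0; have [c _] := MVT_line h_ge0 is_derive_q; rewrite q0 subr0 => ->.
by rewrite [h / 4]mulrC -div1r ler_wpM2r ?q'_le.
Qed.

Let q_sub_ge h : h <= 0 -> h / 4 <= q h - p.
Proof.
move=> h_le0; have [c _] := MVT_line h_le0 is_derive_q; rewrite q0 sub0r => E.
have : q c * (1 - q c) * - h <= 1 / 4 * - h by rewrite ler_wpM2r ?q'_le ?oppr_ge0.
lra.
Qed.

Let phi_le1 h : phi h <= 1.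
Proof.
have phi0 : phi 0 = 1.
  by rewrite /phi /D expR0 mulr1 subrK expr0n /= mul0r mulr0 addr0 oppr0 expR0 mulr1.
have [h_ge0|h_lt0] := leP 0 h.
  have [c /andP[c_ge0 _]] := MVT_line h_ge0 is_derive_phi.
  rewrite phi0 subr0 => E; rewrite -subr_le0 E.
  by rewrite mulr_le0_ge0 // mulr_ge0_le0 ?(ltW (phi_gt0 c)) // subr_le0 q_sub_le.
have [c /andP[_ c_le0]] := MVT_line (ltW h_lt0) is_derive_phi.
rewrite phi0 sub0r => E; rewrite -subr_ge0 E.
by rewrite -mulrA mulr_ge0 ?(ltW (phi_gt0 c)) // mulr_ge0 ?subr_ge0 ?q_sub_ge // oppr_ge0 ltW.
Qed.

Lemma hoeffding_bernoulli h : 1 - p + p * expR h <= expR (p * h + h ^+ 2 / 8).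
Proof.
by have := phi_le1 h; rewrite /phi expRN mulrC ler_pdivrMr ?expR_gt0 // mul1r.
Qed.

End Bernoulli.

Lemma expR_le_chord (a b t z : R) : a <= z <= b ->
  (b - a) * expR (t * z) <= (b - z) * expR (t * a) + (z - a) * expR (t * b).
Proof.
case/andP=> az zb.
have tangent y : expR (t * z) * (1 + t * (y - z)) <= expR (t * y).
  have -> : t * y = t * (y - z) + t * z by ring.
  by rewrite expRD mulrC ler_wpM2r ?expR_ge0 ?expR_ge1Dx.
have -> : (b - a) * expR (t * z) = (b - z) * (expR (t * z) * (1 + t * (a - z)))
    + (z - a) * (expR (t * z) * (1 + t * (b - z))) by ring.
by rewrite lerD // ler_wpM2l ?subr_ge0 ?tangent.
Qed.

Lemma hoeffding_two_point (a b m t : R) : a < b -> a <= m <= b ->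
  ((b - m) * expR (t * a) + (m - a) * expR (t * b)) / (b - a)
  <= expR (t * m + t ^+ 2 * (b - a) ^+ 2 / 8).
Proof.
move=> ab /andP[am mb]; have ba_neq0 : b - a != 0 by rewrite subr_eq0 gt_eqF.
set p := (m - a) / (b - a); set h := t * (b - a).
have p_ge0 : 0 <= p by rewrite divr_ge0 ?subr_ge0 // ltW.
have p_le1 : p <= 1 by rewrite ler_pdivrMr ?subr_gt0 // mul1r lerD2r.
have -> : expR (t * b) = expR (t * a) * expR h by rewrite -expRD /h; congr expR; ring.
have -> : t * m + t ^+ 2 * (b - a) ^+ 2 / 8 = t * a + (p * h + h ^+ 2 / 8).
  by rewrite /p /h; field.
rewrite expRD.
have -> : ((b - m) * expR (t * a) + (m - a) * (expR (t * a) * expR h)) / (b - a)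
    = expR (t * a) * (1 - p + p * expR h) by rewrite /p; field.
by rewrite ler_wpM2l ?expR_ge0 ?hoeffding_bernoulli.
Qed.

Lemma hoeffding_mean (I : finType) (A : {set I}) (z : I -> R) (a b t : R) :
  (0 < #|A|)%N -> (forall i, i \in A -> a <= z i <= b) ->
  (\sum_(i in A) expR (t * z i)) / #|A|%:R <=
  expR (t * ((\sum_(i in A) z i) / #|A|%:R) + t ^+ 2 * (b - a) ^+ 2 / 8).
Proof.
move=> A_gt0 zab; set N : R := #|A|%:R; set m := (\sum_(i in A) z i) / N.
have N_gt0 : 0 < N by rewrite ltr0n.
have sum_const c : \sum_(i in A) c = c * N by rewrite sumr_const mulr_natr.
have am : a <= m <= b.
  rewrite ler_pdivlMr ?ler_pdivrMr // -!sum_const.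
  by apply/andP; split; apply: ler_sum => i /zab /andP[].
have [ab_eq|ab_neq] := eqVneq a b.
  have zE i : i \in A -> z i = a by move/zab; rewrite -ab_eq -eq_le => /eqP.
  have mE : m = a by rewrite /m (eq_bigr _ zE) sum_const mulfK ?gt_eqF.
  under eq_bigr => i iA do rewrite zE //.
  by rewrite sum_const mulfK ?gt_eqF // mE ab_eq subrr expr0n /= mulr0 mul0r addr0.
have ab : a < b by rewrite lt_neqAle ab_neq; case/andP: am; exact: le_trans.
apply: le_trans (hoeffding_two_point t ab am).
pose L y := ((b - y) * expR (t * a) + (y - a) * expR (t * b)) / (b - a).
rewrite -[X in _ <= X]/(L m).
have -> : L m = (\sum_(i in A) L (z i)) / N.
  rewrite /L -mulr_suml big_split /= -!mulr_suml !sumrB !sum_const /m.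
  by field; rewrite !gt_eqF ?subr_gt0.
rewrite ler_pM2r ?invr_gt0 //; apply: ler_sum => i /zab zi.
by rewrite ler_pdivlMr ?subr_gt0 // mulrC expR_le_chord.
Qed.

End Hoeffding.

Section Maclaurin.
Variables (R : realFieldType) (I : finType) (x : I -> R).
Hypothesis x_ge0 : forall i, 0 <= x i.
Implicit Types (S T : {set I}) (k : nat).

Definition esym k S : R :=
  \sum_(T : {set I} | (T \subset S) && (#|T| == k)) \prod_(i in T) x i.

Definition esym_mean k S : R := esym k S / 'C(#|S|, k)%:R.

Lemma esym_ge0 k S : 0 <= esym k S.
Proof. by apply: sumr_ge0 => T _; apply: prodr_ge0. Qed.

Lemma esym0 S : esym 0 S = 1.
Proof.
rewrite /esym (big_pred1 set0) ?big_set0 // => T /=.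
by rewrite cards_eq0; case: eqP => [->|]; rewrite ?sub0set ?andbF.
Qed.

Lemma sum_subsets_setD1 j S k (F : {set I} -> R) : j \in S ->
  \sum_(T : {set I} | [&& T \subset S, #|T| == k.+1 & j \in T]) F (T :\ j)
  = \sum_(T : {set I} | (T \subset S :\ j) && (#|T| == k)) F T.
Proof.
move=> jS; rewrite (reindex_onto (fun T => j |: T) (fun T => T :\ j)) /=; last first.
  by move=> T /and3P[_ _ jT]; rewrite setD1K.
apply: eq_big => [T|T /andP[_ /eqP -> //]].
rewrite subsetD1 setU11 andbT.
case jT: (j \in T).
  suff -> : ((j |: T) :\ j == T) = false by rewrite !andbF.
  by apply/negbTE/eqP => E; move: jT; rewrite -E setD11.
rewrite setU1K ?jT // eqxx andbT cardsU1 jT add1n eqSS.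
by rewrite subUset sub1set jS /= andbT.
Qed.

Lemma esymS_setD1 j S k : j \in S ->
  esym k.+1 S = esym k.+1 (S :\ j) + x j * esym k (S :\ j).
Proof.
move=> jS; rewrite /esym (bigID (fun T : {set I} => j \in T)) /= addrC; congr (_ + _).
  by apply: eq_bigl => T; rewrite subsetD1; case: (j \in T); rewrite ?andbF ?andbT.
rewrite mulr_sumr -(sum_subsets_setD1 k (fun T => x j * \prod_(i in T) x i) jS).
apply: eq_big => [T|T /andP[_ jT]]; first by rewrite andbA.
by rewrite (big_setD1 _ jT).
Qed.

Lemma sum_mul_esym_setD1 S k :
  \sum_(j in S) x j * esym k (S :\ j) = k.+1%:R * esym k.+1 S.
Proof.
transitivity (\sum_(j in S) \sum_(T : {set I} | [&& T \subset S, #|T| == k.+1 & j \in T])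
    x j * \prod_(i in T :\ j) x i).
  apply: eq_bigr => j jS; rewrite /esym mulr_sumr.
  by rewrite -(sum_subsets_setD1 k (fun T => x j * \prod_(i in T) x i) jS).
rewrite (exchange_big_dep (fun T : {set I} => (T \subset S) && (#|T| == k.+1))) /=; last first.
  by move=> j T _ /and3P[-> ->].
rewrite /esym mulr_sumr; apply: eq_bigr => T /andP[TS /eqP cardT].
have -> : k.+1%:R = \sum_(i in T) (1 : R) by rewrite sumr_const cardT.
rewrite mulr_suml; apply: eq_big => [j|j /and3P[_ _ /andP[_ jT]]].
  by rewrite TS cardT eqxx /=; case jT: (j \in T); rewrite ?andbF // (subsetP TS).
by rewrite mul1r -(big_setD1 _ jT).
Qed.

Lemma esym1 S : esym 1 S = \sum_(i in S) x i.
Proof.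
have := sum_mul_esym_setD1 S 0; rewrite mul1r => <-.
by apply: eq_bigr => j _; rewrite esym0 mulr1.
Qed.

Lemma sum_esym_setD1 S k :
  \sum_(j in S) esym k (S :\ j) = (#|S|%:R - k%:R) * esym k S.
Proof.
case: k => [|k].
  by under eq_bigr do rewrite esym0; rewrite sumr_const esym0 mulr1 subr0.
transitivity (\sum_(j in S) (esym k.+1 S - x j * esym k (S :\ j))).
  by apply: eq_bigr => j jS; rewrite (esymS_setD1 _ jS) addrK.
by rewrite sumrB sum_mul_esym_setD1 sumr_const mulrBl !mulr_natl.
Qed.

(* [esym k.+1 (S :\ j) - esym k.+1 (S :\ i) = (x i - x j) * esym k (S :\ i :\ j)]. *)
Lemma esym_setD1_pair_ge0 S i j k : i \in S -> j \in S ->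
  0 <= (x i - x j) * (esym k (S :\ j) - esym k (S :\ i)).
Proof.
move=> iS jS; have [->|ij] := eqVneq i j; first by rewrite subrr mul0r.
case: k => [|k]; first by rewrite !esym0 subrr mulr0.
have iSj : i \in S :\ j by rewrite in_setD1 ij.
have jSi : j \in S :\ i by rewrite in_setD1 eq_sym ij.
rewrite (esymS_setD1 _ iSj) (esymS_setD1 _ jSi) [(S :\ i) :\ j]setDDl setUC -setDDl.
have := esym_ge0 k ((S :\ j) :\ i); move: (esym k.+1 _) (esym k _) => f e e_ge0.
have -> : (x i - x j) * (f + x i * e - (f + x j * e)) = (x i - x j) ^+ 2 * e by ring.
by rewrite mulr_ge0 ?sqr_ge0.
Qed.

Lemma esym_newton S k :
  #|S|%:R * k.+1%:R * esym k.+1 S <= (#|S|%:R - k%:R) * esym 1 S * esym k S.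
Proof.
pose X := \sum_(i in S) \sum_(j in S) (x i - x j) * esym k (S :\ j).
have XE : X = (#|S|%:R - k%:R) * esym 1 S * esym k S - #|S|%:R * k.+1%:R * esym k.+1 S.
  transitivity (\sum_(i in S) \sum_(j in S) x i * esym k (S :\ j)
              - \sum_(i in S) \sum_(j in S) x j * esym k (S :\ j)).
    rewrite -sumrB; apply: eq_bigr => i _.
    by rewrite -sumrB; apply: eq_bigr => j _; rewrite mulrBl.
  under eq_bigr do rewrite -mulr_sumr.
  under [X in _ - X]eq_bigr do rewrite sum_mul_esym_setD1.
  rewrite -mulr_suml -esym1 sum_esym_setD1 sumr_const.
  by rewrite -[_ *+ #|S|]mulr_natl; ring.
have X2 : X + X = \sum_(i in S) \sum_(j in S)
    (x i - x j) * (esym k (S :\ j) - esym k (S :\ i)).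
  rewrite {2}/X exchange_big -big_split /=; apply: eq_bigr => i _.
  by rewrite -big_split /=; apply: eq_bigr => j _; ring.
have : 0 <= X + X.
  rewrite X2 sumr_ge0 // => i iS; rewrite sumr_ge0 // => j jS.
  exact: esym_setD1_pair_ge0.
by rewrite -mulr2n pmulrn_lge0 // XE subr_ge0.
Qed.

Lemma esym_mean_ge0 k S : 0 <= esym_mean k S.
Proof. by rewrite divr_ge0 ?esym_ge0. Qed.

Lemma esym_mean1 S : esym_mean 1 S = (\sum_(i in S) x i) / #|S|%:R.
Proof. by rewrite /esym_mean esym1 bin1. Qed.

Lemma esym_meanS_le k S : (k < #|S|)%N ->
  esym_mean k.+1 S <= esym_mean 1 S * esym_mean k S.
Proof.
move=> ltkS; rewrite /esym_mean bin1.
have binS : k.+1%:R * 'C(#|S|, k.+1)%:R = (#|S|%:R - k%:R) * 'C(#|S|, k)%:R :> R.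
  by rewrite -natrM mul_bin_left natrM natrB // ltnW.
have C_gt0 : 0 < 'C(#|S|, k)%:R :> R by rewrite ltr0n bin_gt0 ltnW.
have C'_gt0 : 0 < 'C(#|S|, k.+1)%:R :> R by rewrite ltr0n bin_gt0.
have N_gt0 : 0 < #|S|%:R :> R by rewrite ltr0n (leq_ltn_trans _ ltkS).
move: binS C_gt0 C'_gt0 N_gt0; set N := #|S|%:R.
set C := 'C(#|S|, k)%:R; set C' := 'C(#|S|, k.+1)%:R => binS C_gt0 C'_gt0 N_gt0.
rewrite -(ler_pM2l (mulr_gt0 (ltr0Sn R k) C'_gt0)).
have -> : k.+1%:R * C' * (esym k.+1 S / C') = k.+1%:R * esym k.+1 S.
  by field; rewrite gt_eqF.
have -> : k.+1%:R * C' * (esym 1 S / N * (esym k S / C))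
    = (N - k%:R) * esym 1 S * esym k S / N.
  by rewrite binS; field; rewrite !gt_eqF.
by rewrite ler_pdivlMr // mulrC mulrA esym_newton.
Qed.

Lemma maclaurin k S : (k <= #|S|)%N -> esym_mean k S <= esym_mean 1 S ^+ k.
Proof.
elim: k => [|k IHk] leKS; first by rewrite /esym_mean esym0 bin0 divr1 expr0.
apply: le_trans (esym_meanS_le leKS) _.
by rewrite exprS ler_wpM2l ?esym_mean_ge0 // IHk // ltnW.
Qed.

End Maclaurin.

Lemma hoeffding_without_replacement (R : realType) (I : finType) (S : {set I})
    (k : nat) (z : I -> R) (a b t : R) :
  (0 < k <= #|S|)%N -> (forall i, i \in S -> a <= z i <= b) ->
  (\sum_(T : {set I} | (T \subset S) && (#|T| == k)) expR (t * \sum_(i in T) z i))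
    / 'C(#|S|, k)%:R
  <= expR (k%:R * (t * ((\sum_(i in S) z i) / #|S|%:R) + t ^+ 2 * (b - a) ^+ 2 / 8)).
Proof.
case/andP=> k_gt0 leKS zab; pose y i := expR (t * z i).
have -> : \sum_(T : {set I} | (T \subset S) && (#|T| == k)) expR (t * \sum_(i in T) z i)
    = esym y k S by apply: eq_bigr => T _; rewrite mulr_sumr expR_sum.
apply: le_trans (maclaurin (fun i => expR_ge0 _) leKS) _.
rewrite esym_mean1 expRM_natl lerXn2r ?nnegrE ?expR_ge0 ?hoeffding_mean //.
  by rewrite divr_ge0 ?sumr_ge0 // => i _; apply: expR_ge0.
exact: leq_trans leKS.
Qed.

Section QuadraticForm.
Variables (R : realType) (n : nat).
Implicit Types (x y z : 'cV[R]_n) (A K : 'M[R]_n).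

Lemma qformDl x y A z : qform (x + y) A z = qform x A z + qform y A z.
Proof. by rewrite /qform linearD /= !mulmxDl mxE. Qed.

Lemma qformZl (l : R) x A z : qform (l *: x) A z = l * qform x A z.
Proof. by rewrite /qform linearZ /= -!scalemxAl mxE. Qed.

Lemma qformDr x A y z : qform x A (y + z) = qform x A y + qform x A z.
Proof. by rewrite /qform mulmxDr mxE. Qed.

Lemma qformZr (l : R) x A z : qform x A (l *: z) = l * qform x A z.
Proof. by rewrite /qform -scalemxAr mxE. Qed.

Lemma qformC x y K : K^T = K -> qform x K y = qform y K x.
Proof.
move=> KT; rewrite /qform; transitivity (((y^T *m K *m x)^T) 0 0).
  by rewrite !trmx_mul trmxK KT mulmxA.
by rewrite mxE.
Qed.

Lemma qform_CauchySchwarz x y K : spsd K ->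
  qform x K y ^+ 2 <= qform x K x * qform y K y.
Proof.
case=> KT K_psd.
have quad l : 0 <= qform x K x + 2 * l * qform x K y + l ^+ 2 * qform y K y.
  rewrite -[X in 0 <= X](_ : qform (x + l *: y) K (x + l *: y) = _) ?K_psd //.
  by rewrite !(qformDl, qformDr, qformZl, qformZr) (qformC y x KT); ring.
move: (K_psd x) (K_psd y) quad.
move: (qform x K x) (qform x K y) (qform y K y) => a b c a_ge0 c_ge0 quad.
have [c0|c_neq0] := eqVneq c 0.
  rewrite c0 mulr0; have [-> //|b_neq0] := eqVneq b 0; first by rewrite expr0n.
  have := quad (- (a + 1) / (2 * b)); rewrite c0 mulr0 addr0.
  have -> : 2 * (- (a + 1) / (2 * b)) * b = - (a + 1) by field.
  lra.
have c_gt0 : 0 < c by rewrite lt_def c_neq0.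
have := quad (- b / c).
have -> : a + 2 * (- b / c) * b + (- b / c) ^+ 2 * c = a - b ^+ 2 / c by field.
by rewrite subr_ge0 ler_pdivrMr.
Qed.

Lemma qform_delta_l i A y : qform (delta_mx i 0) A y = (A *m y) i 0.
Proof. by rewrite /qform trmx_delta -mulmxA -rowE mxE. Qed.

Lemma qform_delta i A : qform (delta_mx i 0) A (delta_mx i 0) = A i i.
Proof. by rewrite qform_delta_l -colE mxE. Qed.

Lemma qform_symE x K y : K^T = K -> qform x K y = \sum_j (K *m x) j 0 * y j 0.
Proof.
move=> KT; rewrite /qform -[in x^T *m K]KT -trmx_mul mxE.
by apply: eq_bigr => j _; rewrite mxE.
Qed.

End QuadraticForm.

Section UniformSubsampling.
Variables (R : realType) (n : nat).
Implicit Types (S T : {set 'I_n}) (K : 'M[R]_n) (u : 'cV[R]_n).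

Lemma maxabs_ge K i j : `|K i j| <= maxabs K.
Proof.
apply: le_trans (le_bigmax _ (fun i => \big[Num.max/0]_(j < n) `|K i j|) i).
exact: (le_bigmax _ (fun j => `|K i j|) j).
Qed.

Lemma maxabs_ge0 K : 0 <= maxabs K.
Proof. exact: bigmax_ge_id. Qed.

Lemma maxabs_gt0 K : K != 0 -> 0 < maxabs K.
Proof.
apply: contraTT; rewrite -leNgt negbK => M_le0; apply/eqP/matrixP => i j.
by rewrite mxE; apply/eqP; rewrite -normr_le0 (le_trans (maxabs_ge K i j)).
Qed.

Lemma card_subsets_of S k : #|subsets_of S k| = 'C(#|S|, k).
Proof. exact: cards_draws. Qed.

Lemma sum_uniform_subsample S k (f : {set 'I_n} -> R) :
  \sum_(T in subsets_of S k) uniform_subsample R S k T * f T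
  = (\sum_(T in subsets_of S k) f T) / 'C(#|S|, k)%:R.
Proof.
rewrite mulr_suml; apply: eq_bigr => T TS.
by rewrite /uniform_subsample TS card_subsets_of div1r mulrC.
Qed.

Lemma uniform_subsample_mass S k : (k <= #|S|)%N ->
  \sum_(T in subsets_of S k) uniform_subsample R S k T = 1.
Proof.
move=> leKS; under eq_bigr do rewrite -[uniform_subsample _ _ _ _]mulr1.
by rewrite sum_uniform_subsample sumr_const card_subsets_of divff // pnatr_eq0 -lt0n bin_gt0.
Qed.

Lemma abs_mulmx_le K u i : spsd K ->
  `|(K *m u) i 0| <= Num.sqrt (maxabs K * qform u K u).
Proof.
move=> K_spsd; rewrite -sqrtr_sqr ler_wsqrtr // -qform_delta_l.
apply: le_trans (qform_CauchySchwarz _ _ K_spsd) _.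
by rewrite qform_delta ler_wpM2r ?K_spsd.2 // (le_trans (ler_norm _)) ?maxabs_ge.
Qed.

Lemma qform_pin_qout K u S T k : K^T = K ->
  qform u K (pin R S - qout R T k)
  = (\sum_(i in S) (K *m u) i 0) / #|S|%:R - (\sum_(i in T) (K *m u) i 0) / k%:R.
Proof.
move=> KT; rewrite qform_symE //.
under eq_bigr do rewrite !mxE mulrBr !mulrA.
rewrite sumrB -!mulr_suml !(big_mkcond (fun i => i \in _)).
congr (_ / _ - _ / _); apply: eq_bigr => i _;
  by rewrite mxE; case: (i \in _); rewrite ?mulr1 ?mulr0.
Qed.

Lemma uniform_subsample_mgf_le S k K u : (0 < k <= #|S|)%N -> spsd K ->
  \sum_(T in subsets_of S k)
      uniform_subsample R S k T * expR (qform u K (pin R S - qout R T k))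
  <= expR (maxabs K / k%:R / 2 * qform u K u).
Proof.
move=> kS K_spsd; have /andP[k_pos leKS] := kS.
have k_gt0 : 0 < k%:R :> R by rewrite ltr0n.
have S_gt0 : 0 < #|S|%:R :> R by rewrite ltr0n (leq_trans k_pos leKS).
pose w i := (K *m u) i 0; pose r := Num.sqrt (maxabs K * qform u K u).
pose m := (\sum_(i in S) w i) / #|S|%:R; pose t : R := - k%:R^-1.
have wr i : i \in S -> - r <= w i <= r by move=> _; rewrite -ler_norml abs_mulmx_le.
have r2 : r ^+ 2 = maxabs K * qform u K u.
  by rewrite sqr_sqrtr // mulr_ge0 ?maxabs_ge0 ?K_spsd.2.
have eT T : expR (qform u K (pin R S - qout R T k)) = expR m * expR (t * \sum_(i in T) w i).
  by rewrite qform_pin_qout ?(proj1 K_spsd) // -expRD /m /t /w; congr expR; ring.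
rewrite sum_uniform_subsample; under eq_bigr do rewrite eT.
rewrite -mulr_sumr -mulrA (eq_bigl (fun T => (T \subset S) && (#|T| == k))); last first.
  by move=> T; rewrite inE.
apply: le_trans (ler_wpM2l (expR_ge0 m) (hoeffding_without_replacement t kS wr)) _.
rewrite -expRD (_ : m + k%:R * (t * m + t ^+ 2 * (r - - r) ^+ 2 / 8)
    = maxabs K / k%:R / 2 * qform u K u) //.
have -> : (r - - r) ^+ 2 = 4 * r ^+ 2 by ring.
by rewrite r2 /m /t; field; rewrite !gt_eqF.
Qed.

End UniformSubsampling.

Theorem propositionB1 (R : realType) (n : nat) (S : {set 'I_n}) (nout : nat)
  (K : 'M[R]_n) :
  (1 <= nout)%N -> (nout <= #|S|)%N ->
  spsd K -> K != 0 ->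
  subgaussian_thinning K (Num.sqrt (maxabs K) / Num.sqrt nout%:R) 0 S nout
    (uniform_subsample R S nout).
Proof.
move=> nout_gt0 leKS K_spsd K_neq0; have M_gt0 := maxabs_gt0 K_neq0.
split=> //; split; first by rewrite divr_gt0 ?sqrtr_gt0 ?ltr0n.
split; first by rewrite lexx ltr01.
exists (subsets_of S nout); split; first by rewrite mul0r subr0 uniform_subsample_mass.
move=> u; rewrite expr_div_n !sqr_sqrtr ?ler0n ?(ltW M_gt0) //.
by apply: uniform_subsample_mgf_le; rewrite ?nout_gt0.
Qed.
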